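(* Let $k\ge 2$ and let $\mathrm{R}_{2k}=\{a_0,a_1,\dots,a_{2k-1}\}$ be the dihedral quandle of order $2k$, i.e. the set $\mathbb{Z}_{2k}$ with operation $a_i\cdot a_j=a_{(2j-i)\bmod 2k}$. In the integral quandle ring $\mathbb{Z}[\mathrm{R}_{2k}]$, let $e_i=a_i-a_0$ for $i=1,\dots,2k-1$. Then $e_i\cdot e_j=e_i\cdot e_{k+j}$ for all $j=1,2,\dots,k-1$ and all $i=1,2,\dots,2k-1$.
   Context: The quandle ring $\mathbb{Z}[A]$ of a quandle $A$ is the free abelian group on $A$ with multiplication given by the bilinear extension of the quandle operation: $\left(\sum_i r_i a_i\right)\cdot\left(\sum_j s_j a_j\right)=\sum_{i,j} r_i s_j (a_i\cdot a_j)$. *)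

From mathcomp Require Import all_boot all_order all_algebra.
Set Implicit Arguments. Unset Strict Implicit. Unset Printing Implicit Defensive.
Import GRing.Theory Num.Theory.
Local Open Scope ring_scope.

Definition dih_op (n : nat) (i j : 'I_n) : nat := ((2 * j + (n - i)) %% n)%N.

(* Integral quandle ring Z[R_n]: the free abelian group on 'I_n, represented
   by coefficient functions {ffun 'I_n -> int}; basis element a_i = qbasis i. *)
Definition qring (n : nat) := {ffun 'I_n -> int}.

Definition qbasis (n : nat) (i : 'I_n) : qring n := [ffun c => (c == i)%:Z].

Definition qmul (n : nat) (x y : qring n) : qring n :=
  [ffun c : 'I_n => \sum_(i : 'I_n) \sum_(j : 'I_n)
      if dih_op i j == nat_of_ord c then x i * y j else 0].

Definition qe (n : nat) (i : 'I_n) (h0 : (0 < n)%N) : qring n :=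
  qbasis i - qbasis (Ordinal h0).

From mathcomp Require Import all_boot all_order all_algebra.
Local Open Scope ring_scope.
Import GRing.Theory.

(* In a dihedral quandle of order 2k, a_i . a_j = a_(2j - i) depends on j only
   through 2j mod 2k, i.e. through j mod k.  Hence right multiplication by a_j
   and by a_(k + j) agree on the whole quandle ring, and so do right
   multiplication by e_j and by e_(k + j). *)

Lemma dih_op_congr_modr {k} (i : 'I_(2 * k)) {j j' : 'I_(2 * k)} :
  (j' = j %[mod k])%N -> dih_op i j' = dih_op i j.
Proof.
move=> eq_jj'; rewrite /dih_op -modnDml -[((2 * j + _) %% _)%N]modnDml.
by rewrite -!muln_modr // eq_jj'.
Qed.

Lemma qmulBr n (x y z : qring n) : qmul x (y - z) = qmul x y - qmul x z.
Proof.
apply/ffunP=> c; rewrite !ffunE -sumrB; apply: eq_bigr=> i _.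
rewrite -sumrB; apply: eq_bigr=> j _; rewrite !ffunE.
by case: ifP=> _; rewrite ?mulrBr ?subr0.
Qed.

Lemma qmul_basisr n (x : qring n) j :
  qmul x (qbasis j) =
  [ffun c : 'I_n => \sum_(i : 'I_n) if dih_op i j == nat_of_ord c then x i else 0].
Proof.
apply/ffunP=> c; rewrite !ffunE; apply: eq_bigr=> i _.
rewrite (bigD1 j) //= big1 ?addr0; last first.
  by move=> j' /negbTE neq_j'j; rewrite ffunE neq_j'j mulr0; case: ifP.
by rewrite ffunE eqxx mulr1.
Qed.

Lemma qmul_basis_congr_modr {k} (x : qring (2 * k)) {j j' : 'I_(2 * k)} :
  (j' = j %[mod k])%N -> qmul x (qbasis j') = qmul x (qbasis j).
Proof.
move=> eq_jj'; rewrite !qmul_basisr; apply/ffunP=> c; rewrite !ffunE.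
by apply: eq_bigr=> i _; rewrite (dih_op_congr_modr i eq_jj').
Qed.

Lemma qmul_qe_congr_modr {k} (h0 : (0 < 2 * k)%N) (x : qring (2 * k))
    (j j' : 'I_(2 * k)) :
  (j' = j %[mod k])%N -> qmul x (qe j' h0) = qmul x (qe j h0).
Proof.
by move=> eq_jj'; rewrite /qe !qmulBr (qmul_basis_congr_modr x eq_jj').
Qed.

Theorem lemma2p3 (k : nat) (hk : (2 <= k)%N) (h0 : (0 < 2 * k)%N)
    (i j : 'I_(2 * k)) :
  (1 <= i)%N -> (1 <= j <= k - 1)%N ->
  forall jk : 'I_(2 * k), nat_of_ord jk = (k + j)%N ->
  qmul (qe i h0) (qe j h0) = qmul (qe i h0) (qe jk h0).
Proof.
move=> _ _ jk def_jk; symmetry; apply: qmul_qe_congr_modr.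
by rewrite def_jk modnDl.
Qed.
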